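(* Let $\rho$ be an $n$-qubit state and for $1\le k\le n$ let $\alpha(\rho,\mathcal S_k)$ be the optimal value of the semidefinite program: minimize $\mathrm{Tr}(W\rho)$ over Hermitian $W$ on $\mathcal H_{[n]}$ subject to $\mathrm{Tr}(W)=1$, $W=\sum_{S\in\mathcal S_k}H^S\otimes I^{[n]\setminus S}$ for some Hermitian operators $H^S$ on $\mathcal H_S$, and $W$ fully decomposable. If $\alpha(\rho,\mathcal S_k)<0$ for some $k$, then $\rho$ is genuinely entangled and $$l(\rho)\le\min\{k:\alpha(\rho,\mathcal S_k)<0\}.$$
   Context: Let $[n]=\{1,\dots,n\}$, $\mathcal H_{[n]}=(\mathbb C^2)^{\otimes n}$, $\mathcal H_S$ the tensor product of the qubits in $S$, $I^{T}$ the identity on $\mathcal H_T$, and $\mathcal S_k$ the collection of all $k$-element subsets of $[n]$. For a density matrix $\rho$, $\rho_S$ is the partial trace over qubits outside $S$. An observable $W$ is fully decomposable if for every $\emptyset\ne S\subsetneq[n]$ there exist positive semidefinite $P_S,Q_S$ with $W=P_S+Q_S^{T_S}$, where $T_S$ is the partial transpose on $\mathcal H_S$. A pure state is biseparable if it is a product $|\alpha\rangle_S\otimes|\beta\rangle_{\bar S}$ for some $\emptyset\ne S\subsetneq[n]$; a mixed state is biseparable if it is a convex combination of biseparable pure states; genuinely entangled = not biseparable. $\mathcal C(\rho,\mathcal S)=\{\sigma\text{ density matrix}:\sigma_S=\rho_S\ \forall S\in\mathcal S\}$; $\mathcal S$ detects $\rho$'s GME if all elements of $\mathcal C(\rho,\mathcal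 S)$ are genuinely entangled; $l(\rho)=\min_{\mathcal S\text{ detects }\rho\text{'s GME}}\max_{S\in\mathcal S}|S|$. *)

From HB Require Import structures.
From mathcomp Require Import all_boot all_order all_algebra.
From mathcomp Require Import boolp reals complex.
Unset Printing Implicit Defensive.
Import Order.TTheory GRing.Theory Num.Theory.
Local Open Scope ring_scope.

Section Qubits.
Variable R : realType.
Local Notation C := R[i].
Variable n : nat.

(* Computational basis of H_S = (C^2)^{(x) S}: bit assignments to the qubits of S. *)
Definition Bas (S : {set 'I_n}) : finType := {ffun {i : 'I_n | i \in S} -> bool}.
Definition Bn : finType := {ffun 'I_n -> bool}.

(* Operators on a space with basis T, given by their matrix entries <x|A|y>. *)
Definition op (T : finType) := T -> T -> C.

Definition restr (S : {set 'I_n}) (z : Bn) : Bas S :=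
  [ffun i : {i : 'I_n | i \in S} => z (val i)].

Definition mix (S : {set 'I_n}) (a b : Bn) : Bn :=
  [ffun i => if i \in S then b i else a i].

Arguments restr : clear implicits.
Definition trace {T : finType} (A : op T) : C := \sum_(x : T) A x x.

Definition trprod {T : finType} (W rho : op T) : C :=
  \sum_(x : T) \sum_(y : T) W x y * rho y x.

Definition hermitian {T : finType} (A : op T) : Prop :=
  forall x y, A x y = (A y x)^*.

Definition psd {T : finType} (A : op T) : Prop :=
  hermitian A /\
  forall v : T -> C, 0 <= \sum_(x : T) \sum_(y : T) (v x)^* * A x y * v y.

Definition density {T : finType} (A : op T) : Prop := psd A /\ trace A = 1.

Definition ptrace (S : {set 'I_n}) (rho : op Bn) : op (Bas S) :=
  fun x y => \sum_(z : Bn) \sum_(w : Bn)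
    (if [&& restr S z == x, restr S w == y & restr (~: S) z == restr (~: S) w]
     then rho z w else 0).

(* H^S (x) I^{[n] \ S} *)
Definition extend (S : {set 'I_n}) (H : op (Bas S)) : op Bn :=
  fun z w => if restr (~: S) z == restr (~: S) w
             then H (restr S z) (restr S w) else 0.

Definition ptransp (S : {set 'I_n}) (Q : op Bn) : op Bn :=
  fun z w => Q (mix S z w) (mix S w z).

Definition fully_decomposable (W : op Bn) : Prop :=
  forall S : {set 'I_n}, S != set0 -> S != setT ->
    exists P Q : op Bn, [/\ psd P, psd Q &
      forall z w, W z w = P z w + ptransp S Q z w].

Definition unit_vec (psi : Bn -> C) : Prop := \sum_(z : Bn) (psi z)^* * psi z = 1.

Definition pure_biseparable (psi : Bn -> C) : Prop :=
  unit_vec psi /\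
  exists S : {set 'I_n}, [/\ S != set0, S != setT &
    exists (a : Bas S -> C) (b : Bas (~: S) -> C),
      forall z, psi z = a (restr S z) * b (restr (~: S) z)].

Definition proj (psi : Bn -> C) : op Bn := fun z w => psi z * (psi w)^*.

Definition biseparable (rho : op Bn) : Prop :=
  exists (m : nat) (p : 'I_m -> C) (psi : 'I_m -> Bn -> C),
    [/\ forall j, 0 <= p j, \sum_(j < m) p j = 1,
        forall j, pure_biseparable (psi j) &
        forall z w, rho z w = \sum_(j < m) p j * proj (psi j) z w].

Definition genuinely_entangled (rho : op Bn) : Prop := ~ biseparable rho.

Definition compatible (rho : op Bn) (F : {set {set 'I_n}}) (sigma : op Bn) : Prop :=
  density sigma /\ forall S, S \in F -> forall x y, ptrace S sigma x y = ptrace S rho x y.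

Definition detects (rho : op Bn) (F : {set {set 'I_n}}) : Prop :=
  forall sigma, compatible rho F sigma -> genuinely_entangled sigma.

(* l(rho) = min over detecting families of the max size of their members;
   n.+1 plays the role of +oo when no family detects. *)
Definition lval (rho : op Bn) : nat :=
  \big[minn/n.+1]_(F : {set {set 'I_n}} | `[< detects rho F >])
     \max_(S in F) #|S|.

Definition Sk (k : nat) : {set {set 'I_n}} := [set S : {set 'I_n} | #|S| == k].

Definition feasible (k : nat) (W : op Bn) : Prop :=
  [/\ hermitian W, trace W = 1,
      exists H : forall S : {set 'I_n}, op (Bas S),
        (forall S, S \in Sk k -> hermitian (H S)) /\
        (forall z w, W z w = \sum_(S in Sk k) extend S (H S) z w)
    & fully_decomposable W].

(* optimal value alpha(rho, S_k) (Tr(W rho) is real for Hermitian W, rho) *)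
Definition alpha (rho : op Bn) (k : nat) : R :=
  inf (fun x : R => exists W, feasible k W /\ x = complex.Re (trprod W rho)).

End Qubits.
Arguments Bas {n}.
Arguments Bn n : clear implicits.
Arguments op R T : clear implicits.
Arguments restr {n} S z.
Arguments mix {n} S a b.
Arguments trace {R T} A.
Arguments trprod {R T} W rho.
Arguments hermitian {R T} A.
Arguments psd {R T} A.
Arguments density {R T} A.
Arguments ptrace {R n} S rho.
Arguments extend {R n} S H.
Arguments ptransp {R n} S Q.
Arguments fully_decomposable {R n} W.
Arguments unit_vec {R n} psi.
Arguments pure_biseparable {R n} psi.
Arguments proj {R n} psi.
Arguments biseparable {R n} rho.
Arguments genuinely_entangled {R n} rho.
Arguments compatible {R n} rho F sigma.
Arguments detects {R n} rho F.
Arguments lval {R n} rho.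
Arguments Sk n k : clear implicits.
Arguments feasible {R n} k W.
Arguments alpha {R n} rho k.

From HB Require Import structures.
From mathcomp Require Import all_boot all_order all_algebra.
From mathcomp Require Import boolp reals complex ring.
Import Order.TTheory GRing.Theory Num.Theory.
Local Open Scope ring_scope.

Set Implicit Arguments.
Unset Strict Implicit.
Unset Printing Implicit Defensive.

(* A fully decomposable witness W = P + Q^{T_S} has nonnegative expectation on
   every biseparable state: on a pure state a_S (x) b_{~S}, <P> >= 0, and the
   partial transpose only conjugates the factor a_S, so <Q^{T_S}> is again a
   quadratic form of the PSD operator Q.  If W is moreover a sum of k-body
   terms, Tr(W sigma) depends on sigma only through its k-body marginals.  Hence
   a feasible W with Tr(W rho) < 0 certifies that every state sharing the
   k-body marginals of rho, rho included, is genuinely entangled: S_k detects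
   the entanglement of rho, and l(rho) <= max_{S in S_k} |S| = k. *)

(* [n.+1] is not neutral for [minn], so [lval] only gets the semigroup law. *)
HB.instance Definition _ := SemiGroup.isComLaw.Build nat minn minnA minnC.

Lemma inf_lt0 (R : realType) (E : classical_sets.set R) :
  inf E < 0 -> exists2 x, E x & x < 0.
Proof.
move=> infE_lt0; have [[x Ex]|E0] := pselect (classical_sets.nonempty E).
  by apply: inf_lt infE_lt0; exists x.
by move: infE_lt0; rewrite inf_out ?ltxx // => -[].
Qed.

Section Witness.
Variables (R : realType) (n : nat).
Local Notation C := R[i].
Implicit Types (S : {set 'I_n}) (z w : Bn n) (W rho sigma : op R (Bn n)).

Lemma restr_mix S z w : restr S (mix S z w) = restr S w.
Proof. by apply/ffunP => i; rewrite !ffunE (valP i). Qed.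

Lemma restrC_mix S z w : restr (~: S) (mix S z w) = restr (~: S) z.
Proof.
apply/ffunP => -[i /= iNS]; rewrite !ffunE /=.
by move: iNS; rewrite in_setC => /negbTE ->.
Qed.

Lemma mixK S z w : mix S (mix S z w) (mix S w z) = z.
Proof. by apply/ffunP => i; rewrite !ffunE; case: (i \in S). Qed.

Definition qform W (v : Bn n -> C) : C := \sum_x \sum_y (v x)^* * W x y * v y.

Lemma trprod_proj W psi : trprod W (proj psi) = qform W psi.
Proof.
rewrite /trprod /qform; apply: eq_bigr => x _.
by apply: eq_bigr => y _; rewrite /proj; ring.
Qed.

Lemma qform_ptransp S Q (a : Bas S -> C) (b : Bas (~: S) -> C) :
  qform (ptransp S Q) (fun z => a (restr S z) * b (restr (~: S) z)) =
  qform Q (fun z => (a (restr S z))^* * b (restr (~: S) z)).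
Proof.
rewrite /qform !pair_bigA /=.
pose swap p := (mix S p.1 p.2, mix S p.2 p.1).
have swap_inj : injective swap.
  by apply: (can_inj (g := swap)) => -[z w]; rewrite /swap /= !mixK.
rewrite [RHS](reindex_inj swap_inj); apply: eq_bigr => -[z w] _ /=.
rewrite /ptransp !restr_mix !restrC_mix !rmorphM /= !conjCK; ring.
Qed.

Lemma qform_ge0_pure_biseparable W psi :
  fully_decomposable W -> pure_biseparable psi -> 0 <= qform W psi.
Proof.
move=> W_fd [_ [S [S_neq0 S_neqT [a [b psiE]]]]].
have [P [Q [[_ P_ge0] [_ Q_ge0] WE]]] := W_fd S S_neq0 S_neqT.
have -> : qform W psi = qform P psi + qform (ptransp S Q) psi.
  rewrite /qform -big_split; apply: eq_bigr => x _.
  by rewrite -big_split; apply: eq_bigr => y _; rewrite WE mulrDr mulrDl.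
rewrite (funext psiE) qform_ptransp; exact: addr_ge0 (P_ge0 _) (Q_ge0 _).
Qed.

Lemma trprod_ge0_biseparable W sigma :
  fully_decomposable W -> biseparable sigma -> 0 <= trprod W sigma.
Proof.
move=> W_fd [m [p [psi [p_ge0 _ psi_bisep sigmaE]]]].
have -> : trprod W sigma = \sum_(j < m) p j * trprod W (proj (psi j)).
  rewrite /trprod; under eq_bigr do under eq_bigr do rewrite sigmaE mulr_sumr.
  under eq_bigr do rewrite exchange_big /=.
  rewrite exchange_big; apply: eq_bigr => j _.
  rewrite mulr_sumr; apply: eq_bigr => x _.
  by rewrite mulr_sumr; apply: eq_bigr => y _; ring.
apply: sumr_ge0 => j _; rewrite trprod_proj.
exact/mulr_ge0/qform_ge0_pure_biseparable.
Qed.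

Lemma trprod_extend S (H : op R (Bas S)) sigma :
  trprod (extend S H) sigma = trprod H (ptrace S sigma).
Proof.
rewrite /trprod /extend /ptrace exchange_big pair_big [RHS]pair_big /=.
under [RHS]eq_bigr do rewrite pair_big mulr_sumr.
rewrite [RHS]exchange_big; apply: eq_bigr => -[w z] _ /=.
rewrite (bigD1 (restr S z, restr S w)) //= big1 ?addr0 => [|[x y] /= xy_neq].
  by rewrite !eqxx [_ == restr _ z]eq_sym; case: ifP; rewrite ?mul0r ?mulr0.
case: ifP; rewrite ?mulr0 // => /and3P[/eqP wy /eqP zx _].
by move: xy_neq; rewrite -zx -wy eqxx.
Qed.

Lemma trprod_eq_marginals (F : {set {set 'I_n}}) W (H : forall S, op R (Bas S)) rho sigma :
  (forall z w, W z w = \sum_(S in F) extend S (H S) z w) ->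
  (forall S, S \in F -> forall x y, ptrace S sigma x y = ptrace S rho x y) ->
  trprod W sigma = trprod W rho.
Proof.
move=> WE marg_eq.
have trprodE tau : trprod W tau = \sum_(S in F) trprod (H S) (ptrace S tau).
  rewrite /trprod; under eq_bigr do under eq_bigr do rewrite WE mulr_suml.
  under eq_bigr do rewrite exchange_big /=.
  by rewrite exchange_big; apply: eq_bigr => S _; exact: trprod_extend.
rewrite !trprodE; apply: eq_bigr => S S_F; rewrite /trprod.
by apply: eq_bigr => x _; apply: eq_bigr => y _; rewrite marg_eq.
Qed.

Lemma detects_of_witness (F : {set {set 'I_n}}) W (H : forall S, op R (Bas S)) rho :
  fully_decomposable W ->
  (forall z w, W z w = \sum_(S in F) extend S (H S) z w) ->
  complex.Re (trprod W rho) < 0 -> detects rho F.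
Proof.
move=> W_fd WE W_rho_lt0 sigma [_ marg_eq] sigma_bisep.
have := trprod_ge0_biseparable W_fd sigma_bisep.
rewrite (trprod_eq_marginals WE marg_eq) lecE => /andP[_].
by rewrite leNgt W_rho_lt0.
Qed.

Lemma detects_genuinely_entangled (F : {set {set 'I_n}}) rho :
  density rho -> detects rho F -> genuinely_entangled rho.
Proof. by move=> rho_density; apply; split. Qed.

Lemma lval_le_detects (F : {set {set 'I_n}}) rho :
  detects rho F -> (lval rho <= \max_(S in F) #|S|)%N.
Proof.
move=> F_detects; rewrite /lval (bigD1 F) /=; last exact/asboolP.
exact: geq_minl.
Qed.

Lemma max_card_Sk k : (\max_(S in Sk n k) #|S| <= k)%N.
Proof. by apply/bigmax_leqP => S; rewrite inE => /eqP ->. Qed.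

End Witness.

Theorem proposition5 (R : realType) (n : nat) (rho : op R (Bn n)) :
  density rho ->
  forall k : nat, (1 <= k <= n)%N -> alpha rho k < 0 ->
    genuinely_entangled rho /\ (lval rho <= k)%N.
Proof.
move=> rho_density k _ alpha_lt0.
have [_ [W [[_ _ [H [_ WE]] W_fd] ->]] W_rho_lt0] := inf_lt0 alpha_lt0.
have rho_detected := detects_of_witness W_fd WE W_rho_lt0.
split; first exact: detects_genuinely_entangled rho_detected.
exact: leq_trans (lval_le_detects rho_detected) (max_card_Sk n k).
Qed.
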